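(* $$\sum_{k=1}^\infty\frac{(15k^2-124k-40)8^k}{(4k+1)\binom{4k}k}=30-\frac32\pi.$$ *)

From Stdlib Require Import Reals.
From Coquelicot Require Import Coquelicot.
Open Scope R_scope.

Definition term (k : nat) : R :=
  (15 * (INR k)^2 - 124 * INR k - 40) * 8 ^ k
  / ((4 * INR k + 1) * Binomial.C (4 * k) k).

(* Since 1 / ((4k+1) C(4k,k)) = k! (3k)! / (4k+1)! is the Beta integral of
   x^(3k) (1-x)^k over [0,1], the k-th summand is the integral over [0,1] of
   p(k) y^k, where p(k) = 15k^2 - 124k - 40 and y = 8x^3(1-x) <= 27/32.
   The tails of the power series sum_k p(k) y^k are rational in y, so the
   n-th partial sum is the integral of a fixed rational function of x minus a
   remainder of size O(n^2 (27/32)^n). That fixed function is the derivative of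
   a rational function, contributing 30, minus 3/2 times the derivative of the
   argument of (2x^2 - 1) + i (2x^2 - 2x), which turns by exactly pi on [0,1]. *)

From Stdlib Require Import Reals Lra Lia Factorial.
From Coquelicot Require Import Coquelicot.
Open Scope R_scope.

(* Coquelicot states equalities in the carrier of an abstract normed module;
   [ring] and [field] only recognise them at type [R]. *)
Ltac real_eq := match goal with |- ?l = ?r => change (l = r :> R) end.

Lemma INR_fact_S n : INR (fact (S n)) = (INR n + 1) * INR (fact n).
Proof. rewrite fact_simpl, mult_INR, S_INR. reflexivity. Qed.

Lemma INR_fact_neq_0 n : INR (fact n) <> 0.
Proof. apply not_0_INR, fact_neq_0. Qed.

Lemma is_RInt_beta b : forall a,
  is_RInt (fun x => x ^ a * (1 - x) ^ b) 0 1
    (INR (fact a) * INR (fact b) / INR (fact (a + b + 1))).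
Proof.
  induction b as [|b IH]; intros a.
  - replace (INR (fact a) * INR (fact 0) / INR (fact (a + 0 + 1)))
      with (1 ^ S a / INR (S a) - 0 ^ S a / INR (S a)).
    + apply (is_RInt_ext (fun x => x ^ a)); [intros x _; simpl; ring | apply is_RInt_pow].
    + replace (a + 0 + 1)%nat with (S a) by lia.
      rewrite pow1, pow_i, INR_fact_S, S_INR by lia; simpl.
      pose proof (INR_fact_neq_0 a); pose proof (pos_INR a).
      field; split; lra.
  - (* x^a (1-x)^(b+1) = x^a (1-x)^b - x^(a+1) (1-x)^b *)
    replace (INR (fact a) * INR (fact (S b)) / INR (fact (a + S b + 1)))
      with (INR (fact a) * INR (fact b) / INR (fact (a + b + 1))
            - INR (fact (S a)) * INR (fact b) / INR (fact (S a + b + 1))).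
    + eapply is_RInt_ext; [|exact (is_RInt_minus _ _ _ _ _ _ (IH a) (IH (S a)))].
      intros x _. change (minus ?u ?v) with (u - v). simpl. ring.
    + replace (S a + b + 1)%nat with (S (a + b + 1)) by lia.
      replace (a + S b + 1)%nat with (S (a + b + 1)) by lia.
      rewrite !INR_fact_S, !plus_INR. simpl INR.
      pose proof (INR_fact_neq_0 a); pose proof (INR_fact_neq_0 b);
        pose proof (INR_fact_neq_0 (a + b + 1)); pose proof (pos_INR a); pose proof (pos_INR b).
      field; repeat split; lra.
Qed.

Lemma is_RInt_sum_n (f : nat -> R -> R) (If : nat -> R) a b n :
  (forall k, is_RInt (f k) a b (If k)) ->
  is_RInt (fun x => sum_n (fun k => f k x) n) a b (sum_n If n).
Proof.
  intros Hf. induction n as [|n IH].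
  - rewrite sum_O. eapply is_RInt_ext; [|exact (Hf O)]. intros x _. now rewrite sum_O.
  - rewrite sum_Sn. eapply is_RInt_ext; [|exact (is_RInt_plus _ _ _ _ _ _ IH (Hf (S n)))].
    intros x _. now rewrite sum_Sn.
Qed.

Lemma is_derive_atan_div (u v : R -> R) x du dv :
  is_derive u x du -> is_derive v x dv -> v x <> 0 ->
  is_derive (fun t => atan (u t / v t)) x ((du * v x - u x * dv) / (u x ^ 2 + v x ^ 2)).
Proof.
  intros Hu Hv Hvx.
  replace ((du * v x - u x * dv) / (u x ^ 2 + v x ^ 2))
    with (scal ((du * v x - u x * dv) / v x ^ 2) (/ (1 + (u x / v x)²))).
  - exact (is_derive_comp atan _ x _ _ (is_derive_atan _) (is_derive_div _ _ _ _ _ Hu Hv Hvx)).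
  - change (scal ?a ?b) with (a * b). real_eq. unfold Rsqr. field.
    split; [|exact Hvx]. pose proof (pow2_ge_0 (u x)); pose proof (pow2_gt_0 _ Hvx). lra.
Qed.

Lemma atan_2_add_atan_3 : atan 2 + atan 3 = 3 * PI / 4.
Proof.
  pose proof (atan_inv 2 ltac:(lra)); pose proof (atan_inv 3 ltac:(lra)).
  pose proof Machin_2_3. lra.
Qed.

Lemma is_lim_seq_sq_mul_pow r : 0 < r < 1 -> is_lim_seq (fun n => (INR n + 1) ^ 2 * r ^ n) 0.
Proof.
  intros Hr. set (c n := (INR n + 1) ^ 2 * r ^ n).
  assert (Hpos : forall n, 0 < c n).
  { intros n. pose proof (pos_INR n). apply Rmult_lt_0_compat; [nra | apply pow_lt; lra]. }
  assert (Hinv : is_lim_seq (fun n => / (INR n + 1)) 0).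
  { assert (H := proj1 (is_lim_seq_incr_1 _ _) is_lim_seq_INR).
    apply (is_lim_seq_ext _ _ _ (fun n => f_equal Rinv (S_INR n))), (is_lim_seq_inv _ _ H);
      discriminate. }
  assert (Hratio : is_lim_seq (fun n => Rabs (c (S n) / c n)) r).
  { assert (H1 := is_lim_seq_plus' _ _ _ _ (is_lim_seq_const 1) Hinv).
    replace r with ((1 + 0) * (1 + 0) * r) at 1 by ring.
    eapply is_lim_seq_ext;
      [|exact (is_lim_seq_mult' _ _ _ _ (is_lim_seq_mult' _ _ _ _ H1 H1) (is_lim_seq_const r))].
    intros n. rewrite Rabs_pos_eq by (apply Rlt_le, Rdiv_lt_0_compat; apply Hpos).
    unfold c. rewrite S_INR. pose proof (pos_INR n). pose proof (pow_lt r n ltac:(lra)).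
    simpl pow. field. lra. }
  assert (Hlim := ex_series_lim_0 _ (ex_series_DAlembert c r ltac:(lra)
                                       (fun n => Rgt_not_eq _ _ (Hpos n)) Hratio)).
  eapply is_lim_seq_ext; [|exact Hlim]. intros n. apply Rabs_pos_eq, Rlt_le, Hpos.
Qed.

Lemma is_lim_seq_of_Rabs_sub_le (u b : nat -> R) (l : R) :
  (forall n, Rabs (l - u n) <= b n) -> is_lim_seq b 0 -> is_lim_seq u l.
Proof.
  intros Hub Hb. apply (is_lim_seq_le_le (fun n => l - b n) u (fun n => l + b n)).
  - intros n. pose proof (Hub n) as H. apply Rabs_le_between in H. lra.
  - replace (Finite l) with (Finite (l - 0)) by (f_equal; ring).
    exact (is_lim_seq_minus' _ _ _ _ (is_lim_seq_const l) Hb).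
  - replace (Finite l) with (Finite (l + 0)) by (f_equal; ring).
    exact (is_lim_seq_plus' _ _ _ _ (is_lim_seq_const l) Hb).
Qed.

Definition numer (m : R) : R := 15 * m ^ 2 - 124 * m - 40.

Definition kern (x : R) : R := 8 * x ^ 3 * (1 - x).

Lemma term_eq_beta k :
  term k = numer (INR k) * 8 ^ k * (INR (fact (3 * k)) * INR (fact k) / INR (fact (3 * k + k + 1))).
Proof.
  unfold term, Binomial.C, numer.
  replace (4 * k - k)%nat with (3 * k)%nat by lia.
  replace (3 * k + k + 1)%nat with (S (4 * k)) by lia.
  rewrite INR_fact_S, mult_INR. simpl (INR 4).
  pose proof (INR_fact_neq_0 k); pose proof (INR_fact_neq_0 (3 * k));
    pose proof (INR_fact_neq_0 (4 * k)); pose proof (pos_INR k).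
  field; repeat split; lra.
Qed.

Lemma is_RInt_term k : is_RInt (fun x => numer (INR k) * kern x ^ k) 0 1 (term k).
Proof.
  rewrite term_eq_beta.
  eapply is_RInt_ext;
    [|exact (is_RInt_scal _ _ _ (numer (INR k) * 8 ^ k) _ (is_RInt_beta k (3 * k)))].
  intros x _. change (scal ?u ?v) with (u * v). real_eq.
  unfold kern. rewrite !Rpow_mult_distr, <- pow_mult. ring.
Qed.

Definition tail_poly (m y : R) : R :=
  numer m * (1 - y) ^ 2 + (30 * m - 124) * y * (1 - y) + 15 * y * (1 + y).

(* For |y| < 1, [tail m y] is the sum of the series sum_(k >= m) numer k * y^k. *)
Definition tail (m : nat) (y : R) : R := y ^ m * tail_poly (INR m) y / (1 - y) ^ 3.

Lemma tail_sub_succ m y : y <> 1 -> tail m y - tail (S m) y = numer (INR m) * y ^ m.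
Proof.
  intros Hy. unfold tail, tail_poly, numer. rewrite S_INR. simpl pow.
  field. lra.
Qed.

Lemma sum_n_numer_pow n y : y <> 1 ->
  sum_n (fun k => numer (INR (S k)) * y ^ S k) n = tail 1 y - tail (S (S n)) y.
Proof.
  intros Hy. induction n as [|n IH].
  - rewrite sum_O, <- tail_sub_succ by exact Hy. reflexivity.
  - rewrite sum_Sn, IH, <- (tail_sub_succ (S (S n))) by exact Hy.
    change (plus ?u ?v) with (u + v). real_eq. ring.
Qed.

Lemma kern_le x : kern x <= 27 / 32.
Proof.
  unfold kern.
  assert (0 <= 8 * (x - 3 / 4) ^ 2 * (x ^ 2 + x / 2 + 3 / 16)).
  { apply Rmult_le_pos; [apply Rmult_le_pos; [lra | apply pow2_ge_0] | nra]. }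
  nra.
Qed.

Lemma kern_nonneg x : 0 <= x <= 1 -> 0 <= kern x.
Proof.
  intros Hx. unfold kern.
  apply Rmult_le_pos; [apply Rmult_le_pos; [lra | apply pow_le] |]; lra.
Qed.

Lemma tail_poly_bound m y : 0 <= m -> 0 <= y <= 1 -> Rabs (tail_poly m y) <= 200 * (m + 1) ^ 2.
Proof.
  intros Hm Hy. unfold tail_poly, numer.
  assert (0 <= (1 - y) ^ 2 <= 1) by (split; nra).
  assert (0 <= y * (1 - y) <= 1) by (split; nra).
  apply Rabs_le. split; nra.
Qed.

Lemma tail_bound m y : 0 <= y <= 27 / 32 ->
  Rabs (tail m y) <= 60000 * (INR m + 1) ^ 2 * (27 / 32) ^ m.
Proof.
  intros Hy. pose proof (pos_INR m) as Hm.
  assert (Hpow : 0 <= y ^ m <= (27 / 32) ^ m) by (split; [apply pow_le | apply pow_incr]; lra).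
  assert (Hinv : 0 <= / (1 - y) ^ 3 <= (32 / 5) ^ 3).
  { rewrite <- pow_inv.
    assert (0 < / (1 - y) <= 32 / 5).
    { split; [apply Rinv_0_lt_compat; lra|].
      rewrite <- (Rinv_inv (32 / 5)). apply Rinv_le_contravar; lra. }
    split; [apply pow_le | apply pow_incr]; lra. }
  pose proof (tail_poly_bound (INR m) y Hm ltac:(lra)).
  pose proof (Rabs_pos (tail_poly (INR m) y)).
  unfold tail, Rdiv. rewrite !Rabs_mult, (Rabs_pos_eq (y ^ m)), (Rabs_pos_eq (/ _)) by lra.
  apply Rle_trans with ((27 / 32) ^ m * (200 * (INR m + 1) ^ 2) * (32 / 5) ^ 3).
  - apply Rmult_le_compat; [nra | lra | apply Rmult_le_compat; lra | lra].
  - pose proof (pow2_ge_0 (INR m + 1)). nra.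
Qed.

Definition angle_re (x : R) : R := 2 * x ^ 2 - 1.
Definition angle_im (x : R) : R := 2 * x ^ 2 - 2 * x.

(* The derivative of the argument of angle_re + i angle_im, the denominator
   being angle_re^2 + angle_im^2. *)
Definition angle_density (x : R) : R := (4 * x ^ 2 - 4 * x + 2) / (8 * x ^ 4 - 8 * x ^ 3 + 1).

Lemma angle_denom_sos x : 8 * x ^ 4 - 8 * x ^ 3 + 1 = angle_re x ^ 2 + angle_im x ^ 2.
Proof. unfold angle_re, angle_im. ring. Qed.

Lemma angle_denom_pos x : 0 < 8 * x ^ 4 - 8 * x ^ 3 + 1.
Proof.
  replace (8 * x ^ 4 - 8 * x ^ 3 + 1) with (1 - kern x) by (unfold kern; ring).
  pose proof (kern_le x). lra.
Qed.

Lemma continuous_angle_density x : continuous angle_density x.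
Proof.
  apply (ex_derive_continuous angle_density). unfold angle_density. auto_derive.
  pose proof (angle_denom_pos x). lra.
Qed.

(* The tangent of the argument of (a + i b) (angle_re + i angle_im): wherever
   its denominator does not vanish, its arctangent is a primitive of
   [angle_density]. No single rotation works on all of [0,1], since the argument
   turns by pi there. *)
Definition rotated_slope (a b x : R) : R :=
  (a * angle_im x + b * angle_re x) / (a * angle_re x - b * angle_im x).

Lemma is_derive_atan_rotated_slope a b x :
  a * angle_re x - b * angle_im x <> 0 ->
  is_derive (fun t => atan (rotated_slope a b t)) x (angle_density x).
Proof.
  intros Hre. unfold rotated_slope.
  replace (angle_density x) with
    (((a * (4 * x - 2) + b * (4 * x)) * (a * angle_re x - b * angle_im x)
      - (a * angle_im x + b * angle_re x) * (a * (4 * x) - b * (4 * x - 2)))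
     / ((a * angle_im x + b * angle_re x) ^ 2 + (a * angle_re x - b * angle_im x) ^ 2)).
  - apply (is_derive_atan_div (fun t => a * angle_im t + b * angle_re t)
                                (fun t => a * angle_re t - b * angle_im t)); [| |exact Hre];
      unfold angle_re, angle_im; auto_derive; trivial; real_eq; ring.
  - assert (Hab : a ^ 2 + b ^ 2 <> 0).
    { intro E. apply Hre. assert (a = 0) by nra. assert (b = 0) by nra. subst. ring. }
    pose proof (angle_denom_pos x) as Hpos. rewrite angle_denom_sos in Hpos.
    replace ((a * angle_im x + b * angle_re x) ^ 2 + (a * angle_re x - b * angle_im x) ^ 2)
      with ((a ^ 2 + b ^ 2) * (angle_re x ^ 2 + angle_im x ^ 2)) by ring.
    real_eq. unfold angle_density. rewrite angle_denom_sos.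
    unfold angle_re, angle_im in *. field. split; lra.
Qed.

Lemma is_RInt_angle_density_atan a b l u :
  l <= u -> (forall x, l <= x <= u -> a * angle_re x - b * angle_im x <> 0) ->
  is_RInt angle_density l u (atan (rotated_slope a b u) - atan (rotated_slope a b l)).
Proof.
  intros Hlu Hre.
  apply (is_RInt_derive (fun x => atan (rotated_slope a b x)));
    [|intros; apply continuous_angle_density].
  intros x Hx. rewrite Rmin_left, Rmax_right in Hx by lra.
  exact (is_derive_atan_rotated_slope a b x (Hre x Hx)).
Qed.

Lemma is_RInt_angle_density : is_RInt angle_density 0 1 PI.
Proof.
  assert (H1 := is_RInt_angle_density_atan 1 0 0 (1 / 2) ltac:(lra)
                  ltac:(intros x Hx; unfold angle_re, angle_im; nra)).
  assert (H2 := is_RInt_angle_density_atan 1 2 (1 / 2) 1 ltac:(lra)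
                  ltac:(intros x Hx; unfold angle_re, angle_im; nra)).
  assert (Hslopes : rotated_slope 1 0 (1 / 2) = 1 /\ rotated_slope 1 0 0 = 0 /\
                    rotated_slope 1 2 1 = 2 /\ rotated_slope 1 2 (1 / 2) = - (3))
    by (unfold rotated_slope, angle_re, angle_im; repeat split; field).
  destruct Hslopes as (E1 & E0 & E2 & E3).
  rewrite E1, E0 in H1. rewrite E2, E3 in H2.
  replace PI with (plus (atan 1 - atan 0) (atan 2 - atan (- (3)))).
  - exact (is_RInt_Chasles _ _ _ _ _ _ H1 H2).
  - change (plus ?u ?v) with (u + v).
    rewrite atan_1, atan_0, atan_opp. pose proof atan_2_add_atan_3. lra.
Qed.

(* The rational part of a primitive of [tail 1 (kern x)] (Hermite reduction). *)
Definition rational_part (x : R) : R :=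
  (165 / 2 + 3 * x - 3 * x ^ 2 - 1318 * x ^ 3 + 980 * x ^ 4 + 320 * x ^ 5
   + 5216 * x ^ 6 - 7728 * x ^ 7 + 2560 * x ^ 9) / (1 - kern x) ^ 2.

Lemma is_derive_rational_part x :
  is_derive rational_part x (tail 1 (kern x) + 3 / 2 * angle_density x).
Proof.
  pose proof (kern_le x).
  unfold rational_part, tail, tail_poly, numer, angle_density. simpl INR.
  replace (8 * x ^ 4 - 8 * x ^ 3 + 1) with (1 - kern x) by (unfold kern; ring).
  unfold kern in *. auto_derive; [intro; nra|]. real_eq. field. lra.
Qed.

Lemma continuous_tail_1_kern x : continuous (fun t => tail 1 (kern t)) x.
Proof.
  pose proof (kern_le x).
  apply (ex_derive_continuous (fun t => tail 1 (kern t))).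
  unfold tail, tail_poly, numer. unfold kern in *. auto_derive.
  repeat apply Rmult_integral_contrapositive_currified; intro; nra.
Qed.

Lemma is_RInt_tail_1 : is_RInt (fun x => tail 1 (kern x)) 0 1 (30 - 3 / 2 * PI).
Proof.
  assert (Hrat : is_RInt (fun x => tail 1 (kern x) + 3 / 2 * angle_density x) 0 1
                   (rational_part 1 - rational_part 0)).
  { apply (is_RInt_derive rational_part); intros x _; [apply is_derive_rational_part|].
    apply (continuous_plus (fun t => tail 1 (kern t))); [apply continuous_tail_1_kern|].
    apply (continuous_scal_r (3 / 2) angle_density), continuous_angle_density. }
  replace (30 - 3 / 2 * PI) with (rational_part 1 - rational_part 0 - 3 / 2 * PI)
    by (unfold rational_part, kern; field).
  eapply is_RInt_ext;
    [|exact (is_RInt_minus _ _ _ _ _ _ Hrat (is_RInt_scal _ _ _ (3 / 2) _ is_RInt_angle_density))].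
  intros x _. real_eq. cbv beta. change (minus ?u ?v) with (u - v).
  change (scal ?u ?v) with (u * v). ring.
Qed.

Lemma partial_sum_error n :
  Rabs (30 - 3 / 2 * PI - sum_n (fun k => term (S k)) n)
  <= 60000 * (INR (n + 2) + 1) ^ 2 * (27 / 32) ^ (n + 2).
Proof.
  assert (Hsum := is_RInt_sum_n (fun k x => numer (INR (S k)) * kern x ^ S k)
                    (fun k => term (S k)) 0 1 n (fun k => is_RInt_term (S k))).
  assert (Hrem : is_RInt (fun x => tail (n + 2) (kern x)) 0 1
                   (30 - 3 / 2 * PI - sum_n (fun k => term (S k)) n)).
  { eapply is_RInt_ext; [|exact (is_RInt_minus _ _ _ _ _ _ is_RInt_tail_1 Hsum)].
    intros x _. pose proof (kern_le x).
    change (minus ?u ?v) with (u - v). cbv beta. rewrite sum_n_numer_pow by lra.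
    replace (n + 2)%nat with (S (S n)) by lia. real_eq. ring. }
  apply norm_RInt_le_const with (M := 60000 * (INR (n + 2) + 1) ^ 2 * (27 / 32) ^ (n + 2))
    in Hrem as H; [|lra|].
  - change (norm ?u) with (Rabs u) in H. lra.
  - intros x Hx. apply tail_bound. pose proof (kern_le x); pose proof (kern_nonneg x Hx). lra.
Qed.

Theorem lemma2p3 : is_series (fun n : nat => term (S n)) (30 - 3 / 2 * PI).
Proof.
  apply (is_lim_seq_of_Rabs_sub_le _ _ _ partial_sum_error).
  assert (H := is_lim_seq_scal_l _ 60000 _ (is_lim_seq_sq_mul_pow (27 / 32) ltac:(lra))).
  rewrite Rbar_mult_0_r in H. apply (is_lim_seq_incr_n _ 2) in H.
  eapply is_lim_seq_ext; [|exact H]. intros n. cbv beta. ring.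
Qed.
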